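(* Let $\epsilon\in(0,1)$, let $m\ge 1$ and $f\in\mathbb R_+^m$ (entrywise nonnegative), and set $L:=\frac{2}{\epsilon}-1$. Then the function $z\mapsto\mathcal G_\epsilon(z;f)$ on $\mathbb C^m$ is continuously differentiable and its gradient is Lipschitz continuous with constant $L$: $$\|\nabla_z\mathcal G_\epsilon(z;f)-\nabla_z\mathcal G_\epsilon(y;f)\|\le L\|z-y\|\qquad\forall\, z,y\in\mathbb C^m.$$
   Context: For $x\in\mathbb C$ and $b\ge 0$, the smooth truncated amplitude-Gaussian metric is built from $$g_\epsilon(x;b):=\begin{cases}\frac{1-\epsilon}{2}\left(b-\frac{1}{\epsilon}|x|^2\right), & \text{if } |x|<\epsilon\sqrt b,\\[2pt] \frac12\big(|x|-\sqrt b\big)^2, & \text{otherwise,}\end{cases}$$ and for $z\in\mathbb C^m$, $f\in\mathbb R_+^m$, $\mathcal G_\epsilon(z;f):=\sum_{j}g_\epsilon(z(j);f(j))$. Real-valued functions of complex vectors are differentiated by identifying $\mathbb C^m$ with $\mathbb R^{2m}$ (real and imaginary parts); the gradient is the real gradient written back as a complex vector (so e.g. $\nabla_x\frac12(|x|-\sqrt b)^2=(1-\sqrt b/|x|)x$ for $x\neq0$). $\|\cdot\|$ is the Euclidean ($\ell^2$) norm. *)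

(* C^m is identified with R^(2m), represented as
   'M[R]_(m,2): row j holds (Re z_j, Im z_j). *)
From HB Require Import structures.
From mathcomp Require Import all_boot all_order all_algebra.
From mathcomp Require Import all_classical all_reals all_analysis.
Set Implicit Arguments. Unset Strict Implicit. Unset Printing Implicit Defensive.
Import Order.TTheory GRing.Theory Num.Theory.
Import numFieldNormedType.Exports.
Local Open Scope ring_scope.

Section Defs.
Variable R : realType.

Definition cabs (a b : R) : R := Num.sqrt (a ^+ 2 + b ^+ 2).

Definition geps (eps : R) (a b bb : R) : R :=
  if cabs a b < eps * Num.sqrt bb
  then (1 - eps) / 2 * (bb - (cabs a b) ^+ 2 / eps)
  else 1 / 2 * (cabs a b - Num.sqrt bb) ^+ 2.

Definition Geps (m : nat) (eps : R) (f : 'I_m -> R) (z : 'M[R]_(m, 2)) : R :=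
  \sum_(j < m) geps eps (z j 0) (z j 1) (f j).

(* real inner product on C^m ~ R^(2m): Re <w, z> *)
Definition rdot (m : nat) (w z : 'M[R]_(m, 2)) : R :=
  \sum_(j < m) \sum_(k < 2) w j k * z j k.

Definition enorm (m : nat) (z : 'M[R]_(m, 2)) : R :=
  Num.sqrt (\sum_(j < m) \sum_(k < 2) z j k ^+ 2).

End Defs.

(* With rho = eps * sqrt b, g_eps(x; b) = |x|^2/2 - H_rho(x)/eps + (1 - eps) b/2, where
   H_rho is the Huber function (|x|^2/2 inside the disc of radius rho, rho |x| - rho^2/2
   outside).  H_rho is the supremum over the disc of the maps x |-> <q, x> - |q|^2/2, attained
   at q = P x, the projection of x onto the disc.  Hence H_rho(x + h) - H_rho(x) - <P x, h>
   lies between 0 and |h|^2, so g_eps is differentiable with gradient x - P x / eps.  Since P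
   is firmly nonexpansive, |P x - P y|^2 <= <x - y, P x - P y>, expanding
   |(x - y) - (P x - P y) / eps|^2 bounds the gradient's Lipschitz constant by 2/eps - 1. *)

From HB Require Import structures.
From mathcomp Require Import all_boot all_order all_algebra.
From mathcomp Require Import all_classical all_reals all_analysis.
From mathcomp Require Import ring lra.
Set Implicit Arguments. Unset Strict Implicit. Unset Printing Implicit Defensive.
Import Order.TTheory GRing.Theory Num.Theory.
Import numFieldNormedType.Exports.
Local Open Scope ring_scope.

Section Disc.
Variable R : realType.
Implicit Types (rho a b c d : R).

Lemma cabs_ge0 a b : 0 <= cabs a b.
Proof. exact: sqrtr_ge0. Qed.

Lemma cabs_sqr a b : cabs a b ^+ 2 = a ^+ 2 + b ^+ 2.
Proof. by rewrite sqr_sqrtr // addr_ge0 // sqr_ge0. Qed.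

Lemma dot2_le_cabs a b c d : a * c + b * d <= cabs a b * cabs c d.
Proof.
have lagrange : (a ^+ 2 + b ^+ 2) * (c ^+ 2 + d ^+ 2)
    = (a * c + b * d) ^+ 2 + (a * d - b * c) ^+ 2 by ring.
apply: le_trans (ler_norm _) _.
rewrite -ler_sqr ?nnegrE ?mulr_ge0 ?cabs_ge0 // real_normK ?num_real //.
by rewrite exprMn !cabs_sqr lagrange lerDl sqr_ge0.
Qed.

(* [disc_scale rho a b * (a, b)] is the projection of (a, b) onto the disc of radius rho. *)
Definition disc_scale rho a b : R := if cabs a b <= rho then 1 else rho / cabs a b.

Variant disc_scale_spec rho a b : R -> Type :=
  | DiscIn of cabs a b <= rho : disc_scale_spec rho a b 1
  | DiscOut s of rho < cabs a b & s * cabs a b = rho : disc_scale_spec rho a b s.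

Lemma disc_scaleP rho a b : 0 <= rho -> disc_scale_spec rho a b (disc_scale rho a b).
Proof.
rewrite /disc_scale => rho0; case: leP => [|out]; first exact: DiscIn.
by apply: DiscOut; rewrite // divfK // gt_eqF // (le_lt_trans rho0).
Qed.

Lemma firm_dot_le d1 d2 p1 p2 : p1 ^+ 2 + p2 ^+ 2 <= d1 * p1 + d2 * p2 ->
  d1 * p1 + d2 * p2 <= d1 ^+ 2 + d2 ^+ 2.
Proof.
move=> firm; have := dot2_le_cabs d1 d2 p1 p2.
rewrite -cabs_sqr -[p1 ^+ 2 + _]cabs_sqr in firm *.
have := cabs_ge0 d1 d2; have := cabs_ge0 p1 p2; have := sqr_ge0 (cabs d1 d2 - cabs p1 p2).
nra.
Qed.

Lemma firm_lipschitz u d1 d2 p1 p2 : 1 <= u ->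
  p1 ^+ 2 + p2 ^+ 2 <= d1 * p1 + d2 * p2 ->
  (d1 - u * p1) ^+ 2 + (d2 - u * p2) ^+ 2 <= (2 * u - 1) ^+ 2 * (d1 ^+ 2 + d2 ^+ 2).
Proof.
move=> u1 firm; have dp_le := firm_dot_le firm.
set S := d1 * p1 + d2 * p2 in firm dp_le; set T := p1 ^+ 2 + p2 ^+ 2 in firm dp_le.
set D := d1 ^+ 2 + d2 ^+ 2 in dp_le *.
have T0 : 0 <= T by rewrite addr_ge0 ?sqr_ge0.
have -> : (d1 - u * p1) ^+ 2 + (d2 - u * p2) ^+ 2 = D - 2 * u * S + u ^+ 2 * T
  by rewrite /D /S /T; ring.
rewrite -subr_ge0.
have -> : (2 * u - 1) ^+ 2 * D - (D - 2 * u * S + u ^+ 2 * T)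
  = (4 * u ^+ 2 - 4 * u) * (D - T) + 2 * u * (S - T) + (3 * u ^+ 2 - 2 * u) * T
  by ring.
rewrite !addr_ge0 // mulr_ge0 //; nra.
Qed.

Definition huber rho a b : R :=
  if cabs a b <= rho then (a ^+ 2 + b ^+ 2) / 2 else rho * cabs a b - rho ^+ 2 / 2.

Variables (rho : R) (rho_ge0 : 0 <= rho).
Local Notation s := (disc_scale rho).

Lemma disc_proj_in_disc a b : (s a b * a) ^+ 2 + (s a b * b) ^+ 2 <= rho ^+ 2.
Proof.
have := cabs_sqr a b; case: disc_scaleP => // [r_le|t _ <-] r2.
  by rewrite !mul1r -r2 ler_sqr // nnegrE cabs_ge0.
by rewrite !exprMn -mulrDr -r2.
Qed.

Lemma disc_proj_variational a b q1 q2 : q1 ^+ 2 + q2 ^+ 2 <= rho ^+ 2 ->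
  (a - s a b * a) * (q1 - s a b * a) + (b - s a b * b) * (q2 - s a b * b) <= 0.
Proof.
move=> q_in; have := cabs_sqr a b; case: disc_scaleP => // [_|t out tr] r2.
  by rewrite !mul1r !subrr !mul0r addr0.
have qr : a * q1 + b * q2 <= rho * cabs a b.
  apply: le_trans (dot2_le_cabs a b q1 q2) _; rewrite mulrC ler_wpM2r ?cabs_ge0 //.
  by rewrite -ler_sqr ?nnegrE ?cabs_ge0 // cabs_sqr.
have r0 := cabs_ge0 a b.
have -> : (a - t * a) * (q1 - t * a) + (b - t * b) * (q2 - t * b)
  = (1 - t) * ((a * q1 + b * q2) - t * cabs a b ^+ 2) by rewrite r2; ring.
rewrite expr2 mulrA tr; apply: mulr_ge0_le0; nra.
Qed.

Lemma disc_proj_firm a b c d :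
  (s a b * a - s c d * c) ^+ 2 + (s a b * b - s c d * d) ^+ 2
  <= (a - c) * (s a b * a - s c d * c) + (b - d) * (s a b * b - s c d * d).
Proof.
have := disc_proj_variational a b (disc_proj_in_disc c d).
have := disc_proj_variational c d (disc_proj_in_disc a b).
nra.
Qed.

Lemma huber_proj a b :
  huber rho a b = s a b * a * a + s a b * b * b - ((s a b * a) ^+ 2 + (s a b * b) ^+ 2) / 2.
Proof.
rewrite /huber; have := cabs_sqr a b; case: disc_scaleP => // [->|t out tr] r2.
  by field.
rewrite leNgt out /= -tr.
have -> : t * a * a + t * b * b - ((t * a) ^+ 2 + (t * b) ^+ 2) / 2
  = t * (a ^+ 2 + b ^+ 2) - t ^+ 2 * (a ^+ 2 + b ^+ 2) / 2 by ring.
by rewrite -r2; ring.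
Qed.

Lemma huber_ge_affine a b q1 q2 : q1 ^+ 2 + q2 ^+ 2 <= rho ^+ 2 ->
  q1 * a + q2 * b - (q1 ^+ 2 + q2 ^+ 2) / 2 <= huber rho a b.
Proof.
move=> q_in; rewrite /huber; case: (lerP (cabs a b) rho) => [_|out].
  by have := sqr_ge0 (a - q1); have := sqr_ge0 (b - q2); nra.
have := dot2_le_cabs q1 q2 a b; rewrite -[q1 ^+ 2 + _]cabs_sqr in q_in *.
have q_le : cabs q1 q2 <= rho by rewrite -ler_sqr ?nnegrE ?cabs_ge0.
have : 0 <= (rho - cabs q1 q2) * (cabs a b - rho)
  by apply: mulr_ge0; lra.
have := sqr_ge0 (rho - cabs q1 q2); nra.
Qed.

Lemma huber_taylor a b h1 h2 :
  let D := huber rho (a + h1) (b + h2) - huber rho a b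
           - (s a b * a * h1 + s a b * b * h2) in
  0 <= D /\ D <= h1 ^+ 2 + h2 ^+ 2.
Proof.
have lower := huber_ge_affine (a + h1) (b + h2) (disc_proj_in_disc a b).
have upper := huber_ge_affine a b (disc_proj_in_disc (a + h1) (b + h2)).
move: lower upper (firm_dot_le (disc_proj_firm (a + h1) (b + h2) a b)).
have [-> ->] : a + h1 - a = h1 /\ b + h2 - b = h2 by split; ring.
rewrite /= (huber_proj a b) (huber_proj (a + h1) (b + h2)).
set sx := s a b; set sy := s (a + h1) (b + h2) => lower upper firm.
by split; nra.
Qed.

End Disc.

Section Geps.
Variables (R : realType) (eps : R).
Hypotheses (eps_gt0 : 0 < eps) (eps_lt1 : eps < 1).

Lemma geps_huber a b bb : 0 <= bb -> geps eps a b bb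
  = (a ^+ 2 + b ^+ 2) / 2 - huber (eps * Num.sqrt bb) a b / eps + (1 - eps) * bb / 2.
Proof.
move=> bb_ge0; have eps_neq0 : eps != 0 by rewrite gt_eqF.
have bb_sqr : bb = Num.sqrt bb ^+ 2 by rewrite sqr_sqrtr.
rewrite /geps /huber -cabs_sqr.
set r := cabs a b; set sb := Num.sqrt bb in bb_sqr *.
case: (ltrP r (eps * sb)) => [lt|ge]; first by rewrite (ltW lt); field.
case: (lerP r (eps * sb)) => [le|_]; last by rewrite bb_sqr; field.
have -> : r = eps * sb by apply/le_anti; rewrite le ge.
by rewrite bb_sqr; field.
Qed.

Lemma two_div_eps_sub1_ge0 : 0 <= 2 / eps - 1.
Proof.
by rewrite subr_ge0 ler_pdivlMr // mul1r; apply: le_trans (ltW eps_lt1) _; rewrite ler1n.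
Qed.

(* The gradient of [geps eps] at (a, b) is [geps_grad_factor bb a b * (a, b)]. *)
Definition geps_grad_factor bb a b : R := 1 - disc_scale (eps * Num.sqrt bb) a b / eps.

Lemma geps_taylor a b bb h1 h2 : 0 <= bb ->
  `|geps eps (a + h1) (b + h2) bb - geps eps a b bb
    - geps_grad_factor bb a b * (a * h1 + b * h2)| <= (h1 ^+ 2 + h2 ^+ 2) / eps.
Proof.
move=> bb_ge0.
have rho_ge0 : 0 <= eps * Num.sqrt bb by rewrite mulr_ge0 ?sqrtr_ge0 ?(ltW eps_gt0).
have [D_ge0 D_le] := huber_taylor rho_ge0 a b h1 h2.
rewrite !geps_huber // /geps_grad_factor.
move: D_ge0 D_le; set s := disc_scale _ a b; set Hx := huber _ a b; set Hy := huber _ _ _.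
set D := Hy - Hx - _ => D_ge0 D_le.
have u_ge1 : 1 <= eps^-1 by rewrite invf_ge1 // (ltW eps_lt1).
have -> : ((a + h1) ^+ 2 + (b + h2) ^+ 2) / 2 - Hy / eps + (1 - eps) * bb / 2
    - ((a ^+ 2 + b ^+ 2) / 2 - Hx / eps + (1 - eps) * bb / 2)
    - (1 - s / eps) * (a * h1 + b * h2)
  = (h1 ^+ 2 + h2 ^+ 2) / 2 - eps^-1 * D by rewrite /D; field; rewrite gt_eqF.
have := sqr_ge0 h1; have := sqr_ge0 h2.
by rewrite ler_norml; nra.
Qed.

Lemma geps_grad_lipschitz a b c d bb : 0 <= bb ->
  (geps_grad_factor bb a b * a - geps_grad_factor bb c d * c) ^+ 2
  + (geps_grad_factor bb a b * b - geps_grad_factor bb c d * d) ^+ 2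
  <= (2 / eps - 1) ^+ 2 * ((a - c) ^+ 2 + (b - d) ^+ 2).
Proof.
move=> bb_ge0.
have rho_ge0 : 0 <= eps * Num.sqrt bb by rewrite mulr_ge0 ?sqrtr_ge0 ?(ltW eps_gt0).
have u_ge1 : 1 <= eps^-1 by rewrite invf_ge1 // (ltW eps_lt1).
have := firm_lipschitz u_ge1 (disc_proj_firm rho_ge0 a b c d).
rewrite /geps_grad_factor; set sx := disc_scale _ a b; set sy := disc_scale _ c d.
by congr (_ <= _); ring.
Qed.

End Geps.

Section NormedFacts.
Variables (R : realFieldType) (V W : normedModType R).

Lemma klipschitz_continuous (k : R) (g : V -> W) : k.-lipschitz g -> continuous g.
Proof.
move=> g_lip x; apply/cvgrPdist_lt => e e_gt0.
have k1_gt0 : 0 < `|k| + 1 by rewrite ltr_pwDr.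
near=> y; apply: le_lt_trans (g_lip (x, y) (conj I I)) _ => /=.
have xy_small : `|x - y| * (`|k| + 1) < e.
  rewrite -ltr_pdivlMr //; near: y.
  by apply: cvgr_dist_lt; [exact: cvg_id | rewrite divr_gt0].
have := normr_ge0 (x - y); have := ler_norm k; nra.
Unshelve. all: by end_near.
Qed.

Lemma differentiable_quadratic_remainder (f : V -> W) (l : {linear V -> W}) x (C : R) :
  continuous l -> (forall h, `|f (h + x) - f x - l h| <= C * `|h| ^+ 2) ->
  differentiable f x /\ 'd f x = l :> (V -> W).
Proof.
move=> l_cont rem.
have f_expand : f \o shift x = cst (f x) + l +o_ (0 : V) id.
  apply/eqaddoP => e e_gt0.
  have C1_gt0 : 0 < `|C| + 1 by rewrite ltr_pwDr.
  near=> h; rewrite /= opprD addrA; apply: le_trans (rem h) _.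
  have h_small : `|h| * (`|C| + 1) <= e.
    rewrite -ler_pdivlMr //; apply: ltW; near: h.
    by apply: nbhs0_lt; rewrite divr_gt0.
  have := normr_ge0 h; have := ler_norm C; nra.
have dE := diff_unique l_cont f_expand.
by split; [apply/diff_locallyP; rewrite dE | rewrite dE].
Unshelve. all: by end_near.
Qed.

End NormedFacts.

Section EuclideanNorm.
Variables (R : realType) (m : nat).

Lemma sum_ord2 (V : nmodType) (F : 'I_2 -> V) : \sum_(k < 2) F k = F 0 + F 1.
Proof. by rewrite !big_ord_recl big_ord0 addr0; congr (F _ + F _); apply: val_inj. Qed.

Lemma mxentry_le_norm n (x : 'M[R]_(m, n)) i j : `|x i j| <= `|x|.
Proof.
by rewrite [leRHS]/Num.norm /= mx_normrE; apply/bigmax_geP; right; exists (i, j).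
Qed.

Lemma enorm_ge0 (x : 'M[R]_(m, 2)) : 0 <= enorm x.
Proof. exact: sqrtr_ge0. Qed.

Lemma enorm_sqr (x : 'M[R]_(m, 2)) : enorm x ^+ 2 = \sum_(j < m) \sum_(k < 2) x j k ^+ 2.
Proof.
by rewrite sqr_sqrtr // sumr_ge0 // => j _; rewrite sumr_ge0 // => k _; rewrite sqr_ge0.
Qed.

Lemma mx_norm_le_enorm (x : 'M[R]_(m, 2)) : `|x| <= enorm x.
Proof.
rewrite [leLHS]/Num.norm /= mx_normrE; apply/bigmax_leP; split=> [|[j k] _ /=].
  exact: enorm_ge0.
rewrite -ler_sqr ?nnegrE ?enorm_ge0 // real_normK ?num_real // enorm_sqr.
rewrite (bigD1 j) //= (bigD1 k) //= -addrA lerDl addr_ge0 ?sumr_ge0 // => [k' _|j' _].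
  exact: sqr_ge0.
by rewrite sumr_ge0 // => k' _; rewrite sqr_ge0.
Qed.

Lemma enorm_sqr_le_mx_norm (x : 'M[R]_(m, 2)) : enorm x ^+ 2 <= (m * 2)%:R * `|x| ^+ 2.
Proof.
rewrite enorm_sqr; apply: le_trans (_ : \sum_(j < m) \sum_(k < 2) `|x| ^+ 2 <= _).
  apply: ler_sum => j _; apply: ler_sum => k _.
  by rewrite -real_normK ?num_real // ler_sqr ?nnegrE // mxentry_le_norm.
by rewrite !sumr_const !card_ord -mulrnA mulr_natl mulnC.
Qed.

Lemma enorm_le_mx_norm (x : 'M[R]_(m, 2)) : enorm x <= Num.sqrt (m * 2)%:R * `|x|.
Proof.
rewrite -ler_sqr ?nnegrE ?enorm_ge0 ?mulr_ge0 ?sqrtr_ge0 //.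
by rewrite exprMn (sqr_sqrtr (ler0n _ _)) enorm_sqr_le_mx_norm.
Qed.

Lemma rdot_linear (w : 'M[R]_(m, 2)) : linear (rdot w).
Proof.
move=> a u v; rewrite /rdot scaler_sumr -big_split; apply: eq_bigr => j _.
by rewrite scaler_sumr -big_split; apply: eq_bigr => k _; rewrite !mxE /GRing.scale /=; ring.
Qed.

HB.instance Definition _ (w : 'M[R]_(m, 2)) :=
  GRing.isLinear.Build R 'M[R]_(m, 2) R *:%R (rdot w) (rdot_linear w).

Lemma rdot_continuous (w : 'M[R]_(m, 2)) : continuous (rdot w).
Proof.
apply: continuous_big => [|j _]; first exact: add_continuous.
apply: continuous_big => [|k _ h]; first exact: add_continuous.
exact: cvgMl_tmp (@coord_continuous _ _ _ j k h).
Qed.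

End EuclideanNorm.

Section Gradient.
Variables (R : realType) (m : nat) (eps : R) (f : 'I_m -> R).

Definition Geps_grad (z : 'M[R]_(m, 2)) : 'M[R]_(m, 2) :=
  \matrix_(j, k) (geps_grad_factor eps (f j) (z j 0) (z j 1) * z j k).

Hypotheses (eps_gt0 : 0 < eps) (eps_lt1 : eps < 1) (f_ge0 : forall j, 0 <= f j).

Lemma Geps_grad_lipschitz z y :
  enorm (Geps_grad z - Geps_grad y) <= (2 / eps - 1) * enorm (z - y).
Proof.
rewrite -ler_sqr ?nnegrE ?enorm_ge0 ?mulr_ge0 ?enorm_ge0 ?two_div_eps_sub1_ge0 //.
rewrite exprMn !enorm_sqr mulr_sumr.
apply: ler_sum => j _; rewrite !sum_ord2 !mxE.
exact: geps_grad_lipschitz.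
Qed.

Lemma Geps_taylor z h :
  `|Geps eps f (h + z) - Geps eps f z - rdot (Geps_grad z) h| <= enorm h ^+ 2 / eps.
Proof.
rewrite /Geps /rdot -!sumrB enorm_sqr mulr_suml; apply: le_trans (ler_norm_sum _ _ _) _.
apply: ler_sum => j _; rewrite !sum_ord2 !mxE [h j 0 + _]addrC [h j 1 + _]addrC.
rewrite -!mulrA -mulrDr.
exact: geps_taylor.
Qed.

End Gradient.

Theorem lemma2p1 (R : realType) (eps : R) (m : nat) (f : 'I_m -> R) :
  0 < eps -> eps < 1 -> (0 < m)%N -> (forall j, 0 <= f j) ->
  exists grad : 'M[R]_(m, 2) -> 'M[R]_(m, 2),
    (forall z : 'M[R]_(m, 2),
        differentiable (Geps eps f) z /\
        forall h : 'M[R]_(m, 2), 'd (Geps eps f) z h = rdot (grad z) h) /\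
    continuous grad /\
    (forall z y : 'M[R]_(m, 2),
        enorm (grad z - grad y) <= (2 / eps - 1) * enorm (z - y)).
Proof.
move=> eps_gt0 eps_lt1 _ f_ge0; exists (Geps_grad eps f).
have grad_lip := Geps_grad_lipschitz eps_gt0 eps_lt1 f_ge0.
split; last split; last exact: grad_lip.
- move=> z; have [? dE] : differentiable (Geps eps f) z /\
      'd (Geps eps f) z = rdot (Geps_grad eps f z) :> (_ -> _).
    apply: (differentiable_quadratic_remainder _ (C := (m * 2)%:R / eps)).
      exact: rdot_continuous.
    move=> h; apply: le_trans (Geps_taylor eps_gt0 eps_lt1 f_ge0 z h) _.
    rewrite [leRHS]mulrAC ler_wpM2r ?invr_ge0 ?(ltW eps_gt0) //.
    exact: enorm_sqr_le_mx_norm.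
  by split=> // h; rewrite dE.
- apply: (klipschitz_continuous (k := (2 / eps - 1) * Num.sqrt (m * 2)%:R)).
  move=> [z y] _ /=; apply: le_trans (mx_norm_le_enorm _) _.
  apply: le_trans (grad_lip z y) _.
  by rewrite -mulrA ler_wpM2l ?two_div_eps_sub1_ge0 // enorm_le_mx_norm.
Qed.
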